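(* If $F$ is a bounded below semi-free DG $B$-module with semi-basis $G$, then $F\cong N$ for some appropriate choices of $R$-module homomorphisms $\xi_i$, $\tau_i$, $\alpha_i$, and $\delta_i$ satisfying, for all integers $i$ and $j$, $\xi_i=-\alpha_i$, $\tau_i=t$, $\alpha_{i-1}\alpha_i=-t\delta_i$, $\delta_i\alpha_{i+1}=\alpha_{i-1}\delta_{i+1}$, $\delta_{i+j}(\gamma_{i,s} m_j)=\gamma_{i,s} \delta_j(m_j)$, and $\alpha_{i+j}(\gamma_{i,s} m_j)=\partial_i^A(\gamma_{i,s})m_j+(-1)^i\gamma_{i,s}\alpha_j(m_j)$ for $s=1,\ldots,r_i$ and all $m_j\in M_j$, where $\beta_i=|G\cap F_i|$.
   Context: Let $R$ be a commutative noetherian ring. Let $A$ be a (commutative, positively graded) DG $R$-algebra such that each $A_i$ is free over $R$ of finite rank, with fixed basis $\{\gamma_{i,1},\ldots,\gamma_{i,r_i}\}$ of $A_i$. Let $t\in R$ and $B=K^R(t)\otimes_R A$, where $K^R(t)$ is the Koszul complex on $t$; identify $B_i$ with $A_{i-1}\oplus A_i$ (column vectors), so that $\partial^B_i=\left[\begin{smallmatrix}-\partial^A_{i-1} & 0\\ t & \partial^A_i\end{smallmatrix}\right]$. For cardinals $\beta_i$ ($\beta_i=0$ for $i\ll0$) set $M_i=\bigoplus_{j\ge0}A_j^{(\beta_{i-j})}$. Given $R$-linear maps $\xi_i\colon M_i\to M_{i-1}$, $\tau_i\colon M_i\to M_i$, $\delta_i\colon M_i\to M_{i-2}$, $\alpha_i\colon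 M_i\to M_{i-1}$, let $N$ be the sequence with $N_i=M_{i-1}\oplus M_i$ and $\partial^N_i=\left[\begin{smallmatrix}\xi_{i-1}&\delta_i\\ \tau_{i-1}&\alpha_i\end{smallmatrix}\right]$, with $B$ acting by $\left[\begin{smallmatrix}a_{i-1}\\ a_i\end{smallmatrix}\right]\left[\begin{smallmatrix}m_{j-1}\\ m_j\end{smallmatrix}\right]=\left[\begin{smallmatrix}a_{i-1}m_j+(-1)^ia_im_{j-1}\\ a_im_j\end{smallmatrix}\right]$. *)

From HB Require Import structures.
From mathcomp Require Import all_boot all_order all_algebra.
Set Implicit Arguments.
Unset Strict Implicit.
Unset Printing Implicit Defensive.
Import GRing.Theory.
Local Open Scope ring_scope.

Definition dcast (V : int -> Type) (m n : int) (e : m = n) (x : V m) : V n :=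
  eq_rect m V x n e.

Lemma tcast0 (R : pzRingType) (V : int -> lmodType R) (m n : int) (e : m = n) :
  @dcast (fun k => V k) m n e 0 = 0.
Proof. by case: n / e. Qed.

Definition sgn (R : pzRingType) (i : int) : R := (-1) ^+ absz i.

Lemma eqL1 (i j : int) : i - 1 + j = i + j - 1.
Proof. by rewrite -addrA (addrC (-1)) addrA. Qed.
Lemma eqL2 (i j : int) : i + (j - 1) = i + j - 1.
Proof. by rewrite addrA. Qed.
Lemma eqS2 (i j : int) : i + (j - 1 - 1) = i + j - 1 - 1.
Proof. by rewrite !addrA. Qed.

Definition is_ideal (R : comPzRingType) (I : R -> Prop) : Prop :=
  I 0 /\ (forall x y, I x -> I y -> I (x + y)) /\ (forall r x, I x -> I (r * x)).
Definition noetherian (R : comPzRingType) : Prop :=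
  forall I : nat -> R -> Prop, (forall n, is_ideal (I n)) ->
    (forall n x, I n x -> I n.+1 x) ->
    exists n, forall m x, (n <= m)%N -> I m x -> I n x.

Unset Implicit Arguments.
Record dga (R : comPzRingType) := DGA {
  Ac : int -> lmodType R;
  Amul : forall i j, Ac i -> Ac j -> Ac (i + j);
  Aone : Ac 0;
  Ad : forall i, Ac i -> Ac (i - 1);
  Ar : int -> nat;
  Agam : forall i, 'I_(Ar i) -> Ac i;
  Amul_linl : forall i j (b : Ac j) (r : R) (x y : Ac i),
    Amul i j (r *: x + y) b = r *: Amul i j x b + Amul i j y b;
  Amul_linr : forall i j (a : Ac i) (r : R) (x y : Ac j),
    Amul i j a (r *: x + y) = r *: Amul i j a x + Amul i j a y;
  Amul_assoc : forall i j k (a : Ac i) (b : Ac j) (c : Ac k),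
    Amul (i + j) k (Amul i j a b) c =
    @dcast (fun n => Ac n) _ _ (addrA i j k) (Amul i (j + k) a (Amul j k b c));
  Amul_1l : forall i (a : Ac i),
    @dcast (fun n => Ac n) _ _ (add0r i) (Amul 0 i Aone a) = a;
  Amul_1r : forall i (a : Ac i),
    @dcast (fun n => Ac n) _ _ (addr0 i) (Amul i 0 a Aone) = a;
  Amul_comm : forall i j (a : Ac i) (b : Ac j),
    Amul i j a b = sgn R (i * j) *: @dcast (fun n => Ac n) _ _ (addrC j i) (Amul j i b a);
  Ad_lin : forall i (r : R) (x y : Ac i), Ad i (r *: x + y) = r *: Ad i x + Ad i y;
  Ad_sq : forall i (a : Ac i), Ad (i - 1) (Ad i a) = 0;
  Ad_leibniz : forall i j (a : Ac i) (b : Ac j),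
    Ad (i + j) (Amul i j a b) =
      @dcast (fun n => Ac n) _ _ (eqL1 i j) (Amul (i - 1) j (Ad i a) b)
    + sgn R i *: @dcast (fun n => Ac n) _ _ (eqL2 i j) (Amul i (j - 1) a (Ad j b));
  Apos : forall i (a : Ac i), i < 0 -> a = 0;
  Abasis_span : forall i (a : Ac i),
    exists c : 'I_(Ar i) -> R, a = \sum_(s < Ar i) c s *: Agam i s;
  Abasis_free : forall i (c : 'I_(Ar i) -> R),
    \sum_(s < Ar i) c s *: Agam i s = 0 -> forall s, c s = 0
}.
Set Implicit Arguments.
Arguments Ac {R} d i. Arguments Amul {R} d i j _ _. Arguments Aone {R} d.
Arguments Ad {R} d i _. Arguments Ar {R} d i. Arguments Agam {R} d i _.

Lemma Amul0r (R : comPzRingType) (A : dga R) i j (a : Ac A i) :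
  Amul A i j a 0 = 0.
Proof.
have h := @Amul_linr R A i j a 1 0 0; rewrite !scale1r addr0 in h.
by apply: (@addrI _ (Amul A i j a 0)); rewrite addr0 -h.
Qed.

Definition Bc (R : comPzRingType) (A : dga R) (i : int) : lmodType R :=
  (Ac A (i - 1) * Ac A i)%type.

Definition mulB (R : comPzRingType) (A : dga R) (i j : int)
    (b : Bc A i) (c : Bc A j) : Bc A (i + j) :=
  ( @dcast (fun n => Ac A n) _ _ (eqL1 i j) (Amul A (i - 1) j b.1 c.2)
    + sgn R i *: @dcast (fun n => Ac A n) _ _ (eqL2 i j) (Amul A i (j - 1) b.2 c.1),
    Amul A i j b.2 c.2 ).

Definition oneB (R : comPzRingType) (A : dga R) : Bc A 0 := (0, Aone A).

Definition dB (R : comPzRingType) (A : dga R) (t : R) (i : int) (b : Bc A i) :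
    Bc A (i - 1) :=
  ( - Ad A (i - 1) b.1, t *: b.1 + Ad A i b.2 ).

Unset Implicit Arguments.
Record dgmodB (R : comPzRingType) (A : dga R) (t : R) := DGMod {
  Fc : int -> lmodType R;
  Fact : forall i j, Bc A i -> Fc j -> Fc (i + j);
  Fd : forall j, Fc j -> Fc (j - 1);
  Fact_linl : forall i j (x : Fc j) (r : R) (b c : Bc A i),
    Fact i j (r *: b + c) x = r *: Fact i j b x + Fact i j c x;
  Fact_linr : forall i j (b : Bc A i) (r : R) (x y : Fc j),
    Fact i j b (r *: x + y) = r *: Fact i j b x + Fact i j b y;
  Fact_assoc : forall i j k (b : Bc A i) (c : Bc A j) (x : Fc k),
    Fact (i + j) k (mulB b c) x =
    @dcast (fun n => Fc n) _ _ (addrA i j k) (Fact i (j + k) b (Fact j k c x));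
  Fact_one : forall j (x : Fc j),
    @dcast (fun n => Fc n) _ _ (add0r j) (Fact 0 j (oneB A) x) = x;
  Fd_lin : forall j (r : R) (x y : Fc j), Fd j (r *: x + y) = r *: Fd j x + Fd j y;
  Fd_sq : forall j (x : Fc j), Fd (j - 1) (Fd j x) = 0;
  Fd_leibniz : forall i j (b : Bc A i) (x : Fc j),
    Fd (i + j) (Fact i j b x) =
      @dcast (fun n => Fc n) _ _ (eqL1 i j) (Fact (i - 1) j (dB t b) x)
    + sgn R i *: @dcast (fun n => Fc n) _ _ (eqL2 i j) (Fact i (j - 1) b (Fd j x))
}.
Set Implicit Arguments.
Arguments dgmodB {R} A t. Arguments Fc {R A t} d i. Arguments Fact {R A t} d i j _ _. Arguments Fd {R A t} d j _.

Definition bounded_below (R : comPzRingType) (A : dga R) (t : R) (F : dgmodB A t) :=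
  exists n0 : int, forall i (x : Fc F i), i < n0 -> x = 0.

Definition Flincomb (R : comPzRingType) (A : dga R) (t : R) (F : dgmodB A t)
    (n : int) (c : forall l, Fc F l -> Bc A (n - l))
    (s : seq {l : int & Fc F l}) : Fc F n :=
  \sum_(p <- s) @dcast (fun k => Fc F k) _ _ (subrK (tag p) n)
                  (Fact F (n - tag p) (tag p) (c (tag p) (tagged p)) (tagged p)).

(* G (given degreewise: G l = G \cap F_l) is a semi-basis: a basis of the
   underlying graded B^natural-module F^natural consisting of homogeneous
   elements *)
Definition semi_basis (R : comPzRingType) (A : dga R) (t : R) (F : dgmodB A t)
    (G : forall l, Fc F l -> Prop) : Prop :=
  (forall n (x : Fc F n), exists (c : forall l, Fc F l -> Bc A (n - l))
       (s : seq {l : int & Fc F l}),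
     [/\ uniq s, (forall p, p \in s -> G (tag p) (tagged p)) & x = Flincomb c s])
  /\
  (forall n (c : forall l, Fc F l -> Bc A (n - l)) (s : seq {l : int & Fc F l}),
     uniq s -> (forall p, p \in s -> G (tag p) (tagged p)) ->
     Flincomb c s = 0 -> forall p, p \in s -> c (tag p) (tagged p) = 0).

(* An element of M_j is a finitely supported family (m_{l,g}) with
   g ranging over G \cap F_l and m_{l,g} in A_{j-l}. *)
Definition Mfun (R : comPzRingType) (A : dga R) (t : R) (F : dgmodB A t) (j : int) :=
  forall l, Fc F l -> Ac A (j - l).

Definition Madm (R : comPzRingType) (A : dga R) (t : R) (F : dgmodB A t)
    (G : forall l, Fc F l -> Prop) (j : int) (f : Mfun F j) : Prop :=
  (forall l x, ~ G l x -> f l x = 0) /\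
  exists s : seq {l : int & Fc F l},
    forall l x, f l x <> 0 -> existT (fun k => Fc F k) l x \in s.

Record Mt (R : comPzRingType) (A : dga R) (t : R) (F : dgmodB A t)
    (G : forall l, Fc F l -> Prop) (j : int) := MT {
  mfun : Mfun F j;
  mP : Madm G mfun
}.
Arguments mfun {R A t F G j} m l x.


Lemma Mzero_adm (R : comPzRingType) (A : dga R) (t : R) (F : dgmodB A t)
    (G : forall l, Fc F l -> Prop) j : Madm G (fun l (x : Fc F l) => (0 : Ac A (j - l))).
Proof. by split=> //; exists [::] => l x. Qed.

Lemma Mlin_adm (R : comPzRingType) (A : dga R) (t : R) (F : dgmodB A t)
    (G : forall l, Fc F l -> Prop) j (r : R) (m1 m2 : Mt G j) :
  Madm G (fun l x => r *: mfun m1 l x + mfun m2 l x).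
Proof.
case: m1 m2 => [f1 [z1 [s1 S1]]] [f2 [z2 [s2 S2]]] /=; split.
  by move=> l x Gx; rewrite z1 // z2 // scaler0 addr0.
exists (s1 ++ s2) => l x h; rewrite mem_cat; apply/orP.
have [e1|n1] := eqVneq (f1 l x) 0; last by left; apply: S1; apply/eqP.
have [e2|n2] := eqVneq (f2 l x) 0; last by right; apply: S2; apply/eqP.
by case: h; rewrite e1 e2 scaler0 addr0.
Qed.

Definition Mzero (R : comPzRingType) (A : dga R) (t : R) (F : dgmodB A t)
    (G : forall l, Fc F l -> Prop) j : Mt G j := MT (Mzero_adm G j).

Definition Mlin (R : comPzRingType) (A : dga R) (t : R) (F : dgmodB A t)
    (G : forall l, Fc F l -> Prop) j (r : R) (m1 m2 : Mt G j) : Mt G j :=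
  MT (Mlin_adm r m1 m2).

Definition Madd (R : comPzRingType) (A : dga R) (t : R) (F : dgmodB A t)
    (G : forall l, Fc F l -> Prop) j (m1 m2 : Mt G j) : Mt G j := Mlin 1 m1 m2.
Definition Mscale (R : comPzRingType) (A : dga R) (t : R) (F : dgmodB A t)
    (G : forall l, Fc F l -> Prop) j (r : R) (m : Mt G j) : Mt G j :=
  Mlin r m (Mzero G j).
Definition Mopp (R : comPzRingType) (A : dga R) (t : R) (F : dgmodB A t)
    (G : forall l, Fc F l -> Prop) j (m : Mt G j) : Mt G j := Mscale (-1) m.

Lemma MactA_adm (R : comPzRingType) (A : dga R) (t : R) (F : dgmodB A t)
    (G : forall l, Fc F l -> Prop) i j (a : Ac A i) (m : Mt G j) :
  Madm G (fun l x => @dcast (fun n => Ac A n) _ _ (addrA i j (- l))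
                        (Amul A i (j - l) a (mfun m l x))).
Proof.
case: m => [f [z [s S]]] /=; split.
  by move=> l x Gx; rewrite z // Amul0r tcast0.
exists s => l x h; have [e|n] := eqVneq (f l x) 0; last by apply: S; apply/eqP.
by case: h; rewrite e Amul0r tcast0.
Qed.

Definition MactA (R : comPzRingType) (A : dga R) (t : R) (F : dgmodB A t)
    (G : forall l, Fc F l -> Prop) i j (a : Ac A i) (m : Mt G j) : Mt G (i + j) :=
  MT (MactA_adm a m).
Arguments MactA {R A t F G} i j a m.

Definition Mlinear (R : comPzRingType) (A : dga R) (t : R) (F : dgmodB A t)
    (G : forall l, Fc F l -> Prop) j k (f : Mt G j -> Mt G k) : Prop :=
  forall r m1 m2, f (Mlin r m1 m2) = Mlin r (f m1) (f m2).

Definition Nt (R : comPzRingType) (A : dga R) (t : R) (F : dgmodB A t)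
    (G : forall l, Fc F l -> Prop) (i : int) := (Mt G (i - 1) * Mt G i)%type.

Definition dN (R : comPzRingType) (A : dga R) (t : R) (F : dgmodB A t)
    (G : forall l, Fc F l -> Prop)
    (xi : forall i, Mt G i -> Mt G (i - 1)) (tau : forall i, Mt G i -> Mt G i)
    (delta : forall i, Mt G i -> Mt G (i - 1 - 1))
    (alpha : forall i, Mt G i -> Mt G (i - 1)) (i : int) (n : Nt G i) : Nt G (i - 1) :=
  ( Madd (xi (i - 1) n.1) (delta i n.2), Madd (tau (i - 1) n.1) (alpha i n.2) ).

Definition actN (R : comPzRingType) (A : dga R) (t : R) (F : dgmodB A t)
    (G : forall l, Fc F l -> Prop) (i j : int) (b : Bc A i) (n : Nt G j) :
    Nt G (i + j) :=
  ( Madd (@dcast (fun k => Mt G k) _ _ (eqL1 i j) (MactA (i - 1) j b.1 n.2))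
         (Mscale (sgn R i) (@dcast (fun k => Mt G k) _ _ (eqL2 i j) (MactA i (j - 1) b.2 n.1))),
    MactA i j b.2 n.2 ).

Definition dg_iso (R : comPzRingType) (A : dga R) (t : R) (F : dgmodB A t)
    (G : forall l, Fc F l -> Prop)
    (xi : forall i, Mt G i -> Mt G (i - 1)) (tau : forall i, Mt G i -> Mt G i)
    (delta : forall i, Mt G i -> Mt G (i - 1 - 1))
    (alpha : forall i, Mt G i -> Mt G (i - 1))
    (phi : forall i, Fc F i -> Nt G i) : Prop :=
  [/\ forall i, bijective (phi i),
      forall i (r : R) (x y : Fc F i),
        phi i (r *: x + y) = (Mlin r (phi i x).1 (phi i y).1, Mlin r (phi i x).2 (phi i y).2),
      forall i (x : Fc F i), phi (i - 1) (Fd F i x) = dN xi tau delta alpha (phi i x)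
    & forall i j (b : Bc A i) (x : Fc F j), phi (i + j) (Fact F i j b x) = actN b (phi j x)].

From HB Require Import structures.
From mathcomp Require Import all_boot all_order all_algebra.
From Stdlib Require Import ClassicalEpsilon FunctionalExtensionality.
From Stdlib Require Import ProofIrrelevance Eqdep_dec Classical.
Import GRing.Theory.
Local Open Scope ring_scope.
Set Implicit Arguments.
Unset Strict Implicit.

(* As a graded algebra B = A (+) A e, where e is the Koszul generator in
   degree 1 with e^2 = 0 and d e = t.  A semi-basis G therefore gives
   coordinates x = e (sum_g m'_g g) + sum_g m_g g, i.e. an isomorphism of
   graded B-modules F_n = M_(n-1) e (+) M_n.  On the e-free summand M the
   differential has a component alpha in M and a component delta in M e.
   The Leibniz rule for e m gives xi = -alpha and tau = t, the Leibniz rule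
   for a m with a in A gives the formulas for alpha(a m) and delta(a m), and
   d^2 = 0 on M gives alpha alpha = -t delta and delta alpha = alpha delta. *)

#[local] Arguments Amul_linl {R d i j} b r x y.
#[local] Arguments Amul_1l {R d i} a.
#[local] Arguments Ad_lin {R d i} r x y.
#[local] Arguments Apos {R d i} a.
#[local] Arguments Fact_linl {R A t d i j} x r b c.
#[local] Arguments Fact_linr {R A t d i j} b r x y.
#[local] Arguments Fd_lin {R A t d j} r x y.

(* Degrees are integers, so elements living in provably but not
   definitionally equal degrees are compared as dependent pairs; decidable
   equality on int then recovers equality in a fixed degree. *)
Lemma existT_int_inj (V : int -> Type) n (a b : V n) :
  existT V n a = existT V n b -> a = b.
Proof. exact: (inj_pair2_eq_dec _ (@eq_comparable _) V n a b). Qed.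

Lemma existT_dcast (V : int -> Type) m n (e : m = n) x :
  existT V n (@dcast V m n e x) = existT V m x.
Proof. by case: n / e. Qed.

Lemma dcastK (V : int -> Type) m n (e : m = n) (x : V m) :
  @dcast V n m (esym e) (@dcast V m n e x) = x.
Proof. by case: n / e. Qed.

Lemma dcastKV (V : int -> Type) m n (e : m = n) (y : V n) :
  @dcast V m n e (@dcast V n m (esym e) y) = y.
Proof. by case: n / e y. Qed.

Lemma existT_congr2 (U W Z : int -> Type) (f : forall i j, U i -> W j -> Z (i + j))
    i i' j j' a a' b b' :
  existT U i a = existT U i' a' -> existT W j b = existT W j' b' ->
  existT Z (i + j) (f i j a b) = existT Z (i' + j') (f i' j' a' b').
Proof.
move=> ea eb; have ei : i = i' := f_equal (@projT1 _ _) ea.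
have ej : j = j' := f_equal (@projT1 _ _) eb.
by subst i' j'; rewrite (existT_int_inj ea) (existT_int_inj eb).
Qed.

Section GradedModuleTransport.
Variables (R : pzRingType) (V : int -> lmodType R).

Lemma dcast_lin m n (e : m = n) (r : R) (x y : V m) :
  @dcast (fun k => V k) m n e (r *: x + y) =
  r *: @dcast (fun k => V k) m n e x + @dcast (fun k => V k) m n e y.
Proof. by case: n / e. Qed.

Lemma existT_add m n (x x' : V m) (y y' : V n) :
  existT (fun k => V k) m x = existT (fun k => V k) n y ->
  existT (fun k => V k) m x' = existT (fun k => V k) n y' ->
  existT (fun k => V k) m (x + x') = existT (fun k => V k) n (y + y').
Proof.
move=> ex ex'; have e : m = n := f_equal (@projT1 _ _) ex.
by subst n; rewrite (existT_int_inj ex) (existT_int_inj ex').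
Qed.

Lemma existT_scale m n (r : R) (x : V m) (y : V n) :
  existT (fun k => V k) m x = existT (fun k => V k) n y ->
  existT (fun k => V k) m (r *: x) = existT (fun k => V k) n (r *: y).
Proof.
move=> ex; have e : m = n := f_equal (@projT1 _ _) ex.
by subst n; rewrite (existT_int_inj ex).
Qed.

End GradedModuleTransport.

Lemma linear_map0 {R : pzRingType} {U V : lmodType R} (f : U -> V)
    (f_lin : forall r x y, f (r *: x + y) = r *: f x + f y) : f 0 = 0.
Proof.
have := f_lin 1 0 0; rewrite !scale1r addr0 => e.
by apply: (@addrI _ (f 0)); rewrite addr0 -e.
Qed.
Arguments linear_map0 {R U V} f f_lin.

Lemma sgn_sqr (R : pzRingType) i : sgn R i * sgn R i = 1.
Proof. by rewrite /sgn -exprD addnn -mul2n exprM sqrrN !expr1n. Qed.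

Lemma sgn1 (R : pzRingType) : sgn R 1 = -1.
Proof. by rewrite /sgn expr1. Qed.

Section SemiFreeModule.
Variables (R : comPzRingType) (A : dga R) (t : R) (F : dgmodB A t).

Lemma Amul0l i j (b : Ac A j) : Amul A i j 0 b = 0.
Proof. exact: (linear_map0 (fun a : Ac A i => Amul A i j a b) (Amul_linl b)). Qed.

Lemma AmulZl i j r (a : Ac A i) (b : Ac A j) : Amul A i j (r *: a) b = r *: Amul A i j a b.
Proof. by have := Amul_linl b r a 0; rewrite !addr0 Amul0l addr0. Qed.

Lemma Ad0 i : Ad A i 0 = 0.
Proof. exact: (linear_map0 (Ad A i) Ad_lin). Qed.

Lemma mulB0 i j (b : Bc A i) : mulB b (0 : Bc A j) = 0.
Proof. by rewrite /mulB /= !Amul0r !tcast0 scaler0 addr0. Qed.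

Lemma Fact0l i j (x : Fc F j) : Fact F i j 0 x = 0.
Proof. exact: (linear_map0 (fun b : Bc A i => Fact F i j b x) (Fact_linl x)). Qed.

Lemma Fact0r i j (b : Bc A i) : Fact F i j b 0 = 0.
Proof. exact: (linear_map0 (Fact F i j b) (Fact_linr b)). Qed.

Lemma FactDr i j (b : Bc A i) (x y : Fc F j) :
  Fact F i j b (x + y) = Fact F i j b x + Fact F i j b y.
Proof. by have := Fact_linr b 1 x y; rewrite !scale1r. Qed.

Lemma FdD j (x y : Fc F j) : Fd F j (x + y) = Fd F j x + Fd F j y.
Proof. by have := Fd_lin 1 x y; rewrite !scale1r. Qed.

Lemma Fd_dcast m n (e : m = n) (x : Fc F m) :
  Fd F n (@dcast (fun k => Fc F k) _ _ e x) =
  @dcast (fun k => Fc F k) _ _ (f_equal (fun k => k - 1) e) (Fd F m x).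
Proof. by case: n / e. Qed.

Lemma Fact_mulB i j (b : Bc A i) l (g : Fc F l) (c : Bc A (j - l)) :
  Fact F i j b (@dcast (fun k => Fc F k) _ _ (subrK l j) (Fact F (j - l) l c g)) =
  @dcast (fun k => Fc F k) _ _ (subrK l (i + j))
     (Fact F (i + j - l) l (@dcast (fun k => Bc A k) _ _ (addrA i j (- l)) (mulB b c)) g).
Proof.
apply: existT_int_inj; rewrite existT_dcast.
transitivity (existT (fun k => Fc F k) (i + (j - l) + l)
                (Fact F (i + (j - l)) l (mulB b c) g)); last first.
  by symmetry; apply: (existT_congr2 (Fact F) (@existT_dcast _ _ _ _ _) (erefl _)).
rewrite Fact_assoc existT_dcast.
exact: (existT_congr2 (Fact F) (erefl _) (@existT_dcast _ _ _ _ _)).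
Qed.

Notation homF := {l : int & Fc F l}.

Definition coef_at n (c : forall l, Fc F l -> Bc A (n - l)) (p : homF) :=
  c (tag p) (tagged p).

Definition Fterm n (c : forall l, Fc F l -> Bc A (n - l)) (p : homF) : Fc F n :=
  @dcast (fun k => Fc F k) _ _ (subrK (tag p) n)
    (Fact F (n - tag p) (tag p) (c (tag p) (tagged p)) (tagged p)).

Definition coef_lin n r (c1 c2 : forall l, Fc F l -> Bc A (n - l)) :
    forall l, Fc F l -> Bc A (n - l) :=
  fun l g => r *: c1 l g + c2 l g.

Lemma Fterm0 n c p : coef_at c p = 0 -> @Fterm n c p = 0.
Proof. by rewrite /Fterm /coef_at => ->; rewrite Fact0l tcast0. Qed.

Lemma Flincomb_lin n r c1 c2 s :
  Flincomb (coef_lin r c1 c2) s = r *: @Flincomb _ _ _ F n c1 s + Flincomb c2 s.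
Proof.
rewrite /Flincomb scaler_sumr -big_split /=; apply: eq_bigr => p _.
by rewrite /coef_lin Fact_linl dcast_lin.
Qed.

Lemma eq_Flincomb_supp n (c : forall l, Fc F l -> Bc A (n - l)) u v :
  uniq u -> uniq v ->
  (forall p, coef_at c p != 0 -> p \in u) -> (forall p, coef_at c p != 0 -> p \in v) ->
  Flincomb c u = Flincomb c v.
Proof.
move=> uniq_u uniq_v supp_u supp_v.
have nz_terms w : Flincomb c w = \sum_(p <- [seq p <- w | coef_at c p != 0]) Fterm c p.
  rewrite /Flincomb big_filter [RHS]big_mkcond /=; apply: eq_bigr => p _.
  by have [/Fterm0 <-|] := eqVneq (coef_at c p) 0.
rewrite !nz_terms; apply: perm_big; apply: uniq_perm; rewrite ?filter_uniq //.
move=> p; rewrite !mem_filter; case: (coef_at c p != 0) / idP => //= nz_p.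
by rewrite supp_u // supp_v.
Qed.

Variable G : forall l, Fc F l -> Prop.

Definition in_basis (s : seq homF) := forall p, p \in s -> G (tagged p).

Lemma in_basis_undup_cat s1 s2 :
  in_basis s1 -> in_basis s2 -> in_basis (undup (s1 ++ s2)).
Proof. by move=> G1 G2 p; rewrite mem_undup mem_cat => /orP[/G1|/G2]. Qed.

Lemma Mt_ext j (m1 m2 : Mt G j) : (forall l x, mfun m1 l x = mfun m2 l x) -> m1 = m2.
Proof.
case: m1 m2 => [f1 P1] [f2 P2] /= eq_f.
have ef : f1 = f2.
  by apply: functional_extensionality_dep => l; apply: functional_extensionality.
by subst f2; congr MT; apply: proof_irrelevance.
Qed.

Hypothesis SB : semi_basis G.

Lemma Flincomb_coef_uniq n (c1 c2 : forall l, Fc F l -> Bc A (n - l)) s1 s2 :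
  uniq s1 -> uniq s2 -> in_basis s1 -> in_basis s2 ->
  (forall p, coef_at c1 p != 0 -> p \in s1) -> (forall p, coef_at c2 p != 0 -> p \in s2) ->
  Flincomb c1 s1 = Flincomb c2 s2 -> forall p, coef_at c1 p = coef_at c2 p.
Proof.
move=> U1 U2 G1 G2 S1 S2 E p.
set u := undup (s1 ++ s2).
have Uu : uniq u := undup_uniq _.
have Su1 q : coef_at c1 q != 0 -> q \in u by move/S1; rewrite mem_undup mem_cat => ->.
have Su2 q : coef_at c2 q != 0 -> q \in u.
  by move/S2; rewrite mem_undup mem_cat orbC => ->.
have diff0 : Flincomb (coef_lin (-1) c2 c1) u = 0.
  rewrite Flincomb_lin (eq_Flincomb_supp Uu U1 Su1 S1) (eq_Flincomb_supp Uu U2 Su2 S2) E.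
  by rewrite scaleN1r addNr.
have [p_u|p_u] := boolP (p \in u).
  have := proj2 SB n _ u Uu (in_basis_undup_cat G1 G2) diff0 p p_u.
  by rewrite /coef_lin /coef_at /= scaleN1r => /eqP; rewrite addr_eq0 eqr_opp => /eqP.
have coef0 (c : forall l, Fc F l -> Bc A (n - l)) :
    (forall q, coef_at c q != 0 -> q \in u) -> coef_at c p = 0.
  by move=> S; apply/eqP; apply: contraNT p_u => /S.
by rewrite (coef0 _ Su1) (coef0 _ Su2).
Qed.

(** * Coordinates with respect to the semi-basis *)

Definition basis_expansion n (x : Fc F n) :=
  constructive_indefinite_description _ (proj1 SB n x).

Definition basis_supp n (x : Fc F n) : seq homF :=
  proj1_sig (constructive_indefinite_description _ (proj2_sig (basis_expansion x))).

Lemma basis_suppP n (x : Fc F n) :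
  [/\ uniq (basis_supp x), in_basis (basis_supp x)
    & x = Flincomb (proj1_sig (basis_expansion x)) (basis_supp x)].
Proof. by rewrite /basis_supp; case: constructive_indefinite_description => s []. Qed.

(* The chosen coefficients, cut down to zero off the chosen support. *)
Definition coord n (x : Fc F n) : forall l, Fc F l -> Bc A (n - l) :=
  fun l g => if existT (fun k => Fc F k) l g \in basis_supp x
             then proj1_sig (basis_expansion x) l g else 0.
Arguments coord {n} x l g.

Lemma coord_supp n (x : Fc F n) p : coef_at (coord x) p != 0 -> p \in basis_supp x.
Proof. by case: p => l g; rewrite /coef_at /coord /=; case: ifP => // _; rewrite eqxx. Qed.

Lemma coord_out n (x : Fc F n) p : p \notin basis_supp x -> coef_at (coord x) p = 0.
Proof. by move=> p_out; apply/eqP; apply: contraNT p_out => /coord_supp. Qed.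

Lemma coord_spec n (x : Fc F n) : x = Flincomb (coord x) (basis_supp x).
Proof.
case: (basis_suppP x) => _ _ {1}->; apply: eq_big_seq => -[l g] p_in.
by rewrite /coord /= p_in.
Qed.

Lemma coord_notin_basis n (x : Fc F n) l g : ~ G g -> coord x l g = 0.
Proof.
move=> nGg; rewrite /coord; case: ifP => // g_in; exfalso; apply: nGg.
by case: (basis_suppP x) => _ /(_ _ g_in).
Qed.

Lemma coordE n (x : Fc F n) c s :
  uniq s -> in_basis s -> (forall p, coef_at c p != 0 -> p \in s) ->
  x = Flincomb c s -> forall p, coef_at c p = coef_at (coord x) p.
Proof.
move=> U1 G1 S1 E; case: (basis_suppP x) => U2 G2 _.
by apply: (Flincomb_coef_uniq U1 U2 G1 G2 S1 (@coord_supp n x)); rewrite -E -coord_spec.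
Qed.

Lemma coord_lin n r (x y : Fc F n) p :
  coef_at (coef_lin r (coord x) (coord y)) p = coef_at (coord (r *: x + y)) p.
Proof.
set u := undup (basis_supp x ++ basis_supp y).
case: (basis_suppP x) => Ux Gx _; case: (basis_suppP y) => Uy Gy _.
have Uu : uniq u := undup_uniq _.
have Sx q : coef_at (coord x) q != 0 -> q \in u.
  by move/coord_supp; rewrite mem_undup mem_cat => ->.
have Sy q : coef_at (coord y) q != 0 -> q \in u.
  by move/coord_supp; rewrite mem_undup mem_cat orbC => ->.
apply: (coordE Uu (in_basis_undup_cat Gx Gy)).
  move=> q; rewrite /coef_at /coef_lin.
  have [x0|/Sx //] := eqVneq (coef_at (coord x) q) 0.
  have [y0|/Sy //] := eqVneq (coef_at (coord y) q) 0.
  by rewrite /coef_at in x0 y0; rewrite x0 y0 scaler0 addr0 eqxx.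
rewrite Flincomb_lin (eq_Flincomb_supp Uu Ux Sx (@coord_supp n x)).
by rewrite (eq_Flincomb_supp Uu Uy Sy (@coord_supp n y)) -!coord_spec.
Qed.

Lemma coord_act i j (b : Bc A i) (x : Fc F j) l (g : Fc F l) :
  coord (Fact F i j b x) l g =
  @dcast (fun k => Bc A k) _ _ (addrA i j (- l)) (mulB b (coord x l g)).
Proof.
pose c : forall l, Fc F l -> Bc A (i + j - l) :=
  fun l g => @dcast (fun k => Bc A k) _ _ (addrA i j (- l)) (mulB b (coord x l g)).
case: (basis_suppP x) => Ux Gx _.
have Sc p : coef_at c p != 0 -> p \in basis_supp x.
  by apply: contraNT => /coord_out; rewrite /coef_at /c => ->; rewrite mulB0 tcast0.
have Ec : Fact F i j b x = Flincomb c (basis_supp x).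
  rewrite {1}(coord_spec x) /Flincomb (big_morph _ (FactDr b) (@Fact0r i j b)).
  by apply: eq_bigr => p _; rewrite Fact_mulB.
exact: esym (@coordE _ _ _ _ Ux Gx Sc Ec (existT _ l g)).
Qed.

(** * The isomorphism [toN : F -> N] *)

Definition coord_deg (n l : int) : n - l - 1 = n - 1 - l := addrAC n (- l) (-1).

Definition toN1f n (x : Fc F n) : Mfun F (n - 1) :=
  fun l g => @dcast (fun k => Ac A k) _ _ (coord_deg n l) (coord x l g).1.
Definition toN2f n (x : Fc F n) : Mfun F n := fun l g => (coord x l g).2.

Lemma toN1_adm n (x : Fc F n) : Madm G (toN1f x).
Proof.
split=> [l g nGg|]; first by rewrite /toN1f coord_notin_basis //= tcast0.
exists (basis_supp x) => l g nz; apply: (@coord_supp n x (existT _ l g)).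
by apply/eqP; rewrite /coef_at /= => x0; apply: nz; rewrite /toN1f x0 tcast0.
Qed.

Lemma toN2_adm n (x : Fc F n) : Madm G (toN2f x).
Proof.
split=> [l g nGg|]; first by rewrite /toN2f coord_notin_basis.
exists (basis_supp x) => l g nz; apply: (@coord_supp n x (existT _ l g)).
by apply/eqP; rewrite /coef_at /= => x0; apply: nz; rewrite /toN2f x0.
Qed.

Definition toN n (x : Fc F n) : Nt G n := (MT (toN1_adm x), MT (toN2_adm x)).

Definition msupp j (m : Mt G j) : seq homF :=
  proj1_sig (constructive_indefinite_description _ (proj2 (mP m))).

Lemma msuppP j (m : Mt G j) l x : mfun m l x <> 0 -> existT _ l x \in msupp m.
Proof. by rewrite /msupp; case: constructive_indefinite_description => s /=; apply. Qed.

Definition ofN_coef n (y : Nt G n) : forall l, Fc F l -> Bc A (n - l) :=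
  fun l g => (@dcast (fun k => Ac A k) _ _ (esym (coord_deg n l)) (mfun y.1 l g),
              mfun y.2 l g).
Arguments ofN_coef {n} y l g.

Definition ofN_supp n (y : Nt G n) : seq homF :=
  undup [seq p <- msupp y.1 ++ msupp y.2 | coef_at (ofN_coef y) p != 0].

Definition ofN n (y : Nt G n) : Fc F n := Flincomb (ofN_coef y) (ofN_supp y).

Lemma ofN_supp_uniq n (y : Nt G n) : uniq (ofN_supp y).
Proof. exact: undup_uniq. Qed.

Lemma ofN_coef_supp n (y : Nt G n) p : coef_at (ofN_coef y) p != 0 -> p \in ofN_supp y.
Proof.
move=> nz; rewrite mem_undup mem_filter nz /= mem_cat.
case: p nz => l g; rewrite /coef_at /ofN_coef /= => nz.
have [y1|/eqP/msuppP -> //] := eqVneq (mfun y.1 l g) 0.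
have [y2|/eqP/msuppP ->] := eqVneq (mfun y.2 l g) 0; last by rewrite orbT.
by move: nz; rewrite y1 y2 tcast0 eqxx.
Qed.

Lemma ofN_supp_basis n (y : Nt G n) : in_basis (ofN_supp y).
Proof.
move=> [l g]; rewrite mem_undup mem_filter /coef_at /ofN_coef /= => /andP[nz _].
apply: NNPP => nGg; move: nz.
by rewrite (proj1 (mP y.1) l g nGg) (proj1 (mP y.2) l g nGg) tcast0 eqxx.
Qed.

Lemma ofNK n : cancel (@ofN n) (@toN n).
Proof.
move=> y; have := coordE (ofN_supp_uniq y) (@ofN_supp_basis n y) (@ofN_coef_supp n y)
                    (erefl (ofN y)).
case: y => y1 y2 coefE; congr pair; apply: Mt_ext => l g.
  by move: (coefE (existT _ l g)); rewrite /coef_at /ofN_coef /= /toN1f => <-; rewrite dcastKV.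
by move: (coefE (existT _ l g)); rewrite /coef_at /ofN_coef /= /toN2f => <-.
Qed.

Lemma ofN_coef_toN n (x : Fc F n) : ofN_coef (toN x) = coord x.
Proof.
apply: functional_extensionality_dep => l; apply: functional_extensionality => g.
by rewrite /ofN_coef /= /toN1f /toN2f dcastK; case: (coord x l g).
Qed.

Lemma toNK n : cancel (@toN n) (@ofN n).
Proof.
move=> x; rewrite {2}(coord_spec x) /ofN.
have := @ofN_coef_supp n (toN x); rewrite ofN_coef_toN => supp_x.
case: (basis_suppP x) => Ux _ _.
exact: eq_Flincomb_supp (ofN_supp_uniq _) Ux supp_x (@coord_supp n x).
Qed.

Lemma toN_inj n : injective (@toN n).
Proof. exact: can_inj (@toNK n). Qed.

Lemma toN1_lin n r (x y : Fc F n) l g :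
  mfun (toN (r *: x + y)).1 l g = r *: mfun (toN x).1 l g + mfun (toN y).1 l g.
Proof.
by rewrite /= /toN1f; move: (coord_lin r x y (existT _ l g)); rewrite /coef_at /coef_lin /= => <-;
  rewrite dcast_lin.
Qed.

Lemma toN2_lin n r (x y : Fc F n) l g :
  mfun (toN (r *: x + y)).2 l g = r *: mfun (toN x).2 l g + mfun (toN y).2 l g.
Proof. by rewrite /= /toN2f; move: (coord_lin r x y (existT _ l g)); rewrite /coef_at /= => <-. Qed.

Lemma toN_lin n r (x y : Fc F n) :
  toN (r *: x + y) = (Mlin r (toN x).1 (toN y).1, Mlin r (toN x).2 (toN y).2).
Proof.
by congr pair; apply: Mt_ext => l g; [apply: toN1_lin | apply: toN2_lin].
Qed.

Lemma toN10 n l (g : Fc F l) : mfun (toN (0 : Fc F n)).1 l g = 0.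
Proof. exact: (linear_map0 (fun x : Fc F n => mfun (toN x).1 l g) (fun r x y => toN1_lin r x y g)). Qed.

Lemma toN20 n l (g : Fc F l) : mfun (toN (0 : Fc F n)).2 l g = 0.
Proof. exact: (linear_map0 (fun x : Fc F n => mfun (toN x).2 l g) (fun r x y => toN2_lin r x y g)). Qed.

Lemma toN1D n (x y : Fc F n) l g :
  mfun (toN (x + y)).1 l g = mfun (toN x).1 l g + mfun (toN y).1 l g.
Proof. by have := toN1_lin 1 x y g; rewrite !scale1r. Qed.

Lemma toN2D n (x y : Fc F n) l g :
  mfun (toN (x + y)).2 l g = mfun (toN x).2 l g + mfun (toN y).2 l g.
Proof. by have := toN2_lin 1 x y g; rewrite !scale1r. Qed.

Lemma toN1Z n r (x : Fc F n) l g : mfun (toN (r *: x)).1 l g = r *: mfun (toN x).1 l g.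
Proof. by have := toN1_lin r x 0 g; rewrite !addr0 toN10 addr0. Qed.

Lemma toN2Z n r (x : Fc F n) l g : mfun (toN (r *: x)).2 l g = r *: mfun (toN x).2 l g.
Proof. by have := toN2_lin r x 0 g; rewrite !addr0 toN20 addr0. Qed.

Lemma existT_toN1 n n' (e : n = n') (x : Fc F n) l g :
  existT (fun k => Ac A k) (n' - 1 - l) (mfun (toN (@dcast (fun k => Fc F k) _ _ e x)).1 l g)
  = existT (fun k => Ac A k) (n - 1 - l) (mfun (toN x).1 l g).
Proof. by case: n' / e. Qed.

Lemma existT_toN2 n n' (e : n = n') (x : Fc F n) l g :
  existT (fun k => Ac A k) (n' - l) (mfun (toN (@dcast (fun k => Fc F k) _ _ e x)).2 l g)
  = existT (fun k => Ac A k) (n - l) (mfun (toN x).2 l g).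
Proof. by case: n' / e. Qed.

Lemma toN1_dcast0 n n' (e : n = n') (x : Fc F n) l (g : Fc F l) :
  mfun (toN x).1 l g = 0 -> mfun (toN (@dcast (fun k => Fc F k) _ _ e x)).1 l g = 0.
Proof. by case: n' / e. Qed.

Lemma toN2_dcast0 n n' (e : n = n') (x : Fc F n) l (g : Fc F l) :
  mfun (toN x).2 l g = 0 -> mfun (toN (@dcast (fun k => Fc F k) _ _ e x)).2 l g = 0.
Proof. by case: n' / e. Qed.

Lemma existT_mfun j j' (e : j = j') (m : Mt G j) l g :
  existT (fun k => Ac A k) (j' - l) (mfun (@dcast (fun k => Mt G k) _ _ e m) l g)
  = existT (fun k => Ac A k) (j - l) (mfun m l g).
Proof. by case: j' / e. Qed.

Lemma mfun_dcast0 j j' (e : j = j') (m : Mt G j) l (g : Fc F l) :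
  mfun m l g = 0 -> mfun (@dcast (fun k => Mt G k) _ _ e m) l g = 0.
Proof. by case: j' / e. Qed.

Lemma existT_MactA i j (a : Ac A i) (m : Mt G j) l g :
  existT (fun k => Ac A k) (i + j - l) (mfun (MactA i j a m) l g)
  = existT (fun k => Ac A k) (i + (j - l)) (Amul A i (j - l) a (mfun m l g)).
Proof. exact: existT_dcast. Qed.

Lemma MactA0l i j (m : Mt G j) l (g : Fc F l) : mfun (MactA i j (0 : Ac A i) m) l g = 0.
Proof. by rewrite /= Amul0l tcast0. Qed.

Lemma MactA0r i j (a : Ac A i) l (g : Fc F l) : mfun (MactA i j a (Mzero G j)) l g = 0.
Proof. by rewrite /= Amul0r tcast0. Qed.

Lemma existT_dcast_fst m n (e : m = n) (b : Bc A m) :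
  existT (fun k => Ac A k) (n - 1) (@dcast (fun k => Bc A k) _ _ e b).1
  = existT (fun k => Ac A k) (m - 1) b.1.
Proof. by case: n / e. Qed.

Lemma existT_dcast_snd m n (e : m = n) (b : Bc A m) :
  existT (fun k => Ac A k) n (@dcast (fun k => Bc A k) _ _ e b).2
  = existT (fun k => Ac A k) m b.2.
Proof. by case: n / e. Qed.

Lemma toN_act i j (b : Bc A i) (x : Fc F j) : toN (Fact F i j b x) = actN b (toN x).
Proof.
congr pair; apply: Mt_ext => l g; apply: (@existT_int_inj (fun k => Ac A k)).
  rewrite /= !scale1r addr0 /toN1f existT_dcast coord_act existT_dcast_fst /=.
  apply: existT_add.
    by rewrite existT_dcast existT_mfun existT_MactA.
  apply: existT_scale; rewrite existT_dcast existT_mfun existT_MactA.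
  exact: (existT_congr2 (Amul A) (erefl _) (esym (@existT_dcast _ _ _ _ _))).
by rewrite existT_MactA /= /toN2f coord_act existT_dcast_snd.
Qed.

Definition inclM j (m : Mt G j) : Fc F j := ofN (Mzero G (j - 1), m).

Lemma toN_inclM j (m : Mt G j) : toN (inclM m) = (Mzero G (j - 1), m).
Proof. exact: ofNK. Qed.

Definition alpha j (m : Mt G j) : Mt G (j - 1) := (toN (Fd F j (inclM m))).2.
Definition delta j (m : Mt G j) : Mt G (j - 1 - 1) := (toN (Fd F j (inclM m))).1.

Lemma inclM_lin j r (m1 m2 : Mt G j) : inclM (Mlin r m1 m2) = r *: inclM m1 + inclM m2.
Proof.
apply: toN_inj; rewrite toN_lin !toN_inclM; congr pair; apply: Mt_ext => l g /=.
by rewrite scaler0 addr0.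
Qed.

Lemma alpha_lin j : Mlinear (@alpha j).
Proof. by move=> r m1 m2; rewrite /alpha inclM_lin Fd_lin toN_lin. Qed.

Lemma delta_lin j : Mlinear (@delta j).
Proof. by move=> r m1 m2; rewrite /delta inclM_lin Fd_lin toN_lin. Qed.

Lemma Fact_inclM i j (a : Ac A i) (m : Mt G j) :
  Fact F i j (0, a) (inclM m) = inclM (MactA i j a m).
Proof.
apply: toN_inj; rewrite toN_act !toN_inclM; congr pair; apply: Mt_ext => l g /=.
rewrite mfun_dcast0; last exact: MactA0l.
by rewrite mfun_dcast0 ?scaler0 ?addr0 //; apply: MactA0r.
Qed.

Lemma alpha_act i j (a : Ac A i) (m : Mt G j) :
  alpha (MactA i j a m) =
  Madd (@dcast (fun k => Mt G k) _ _ (eqL1 i j) (MactA (i - 1) j (Ad A i a) m))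
       (Mscale (sgn R i)
          (@dcast (fun k => Mt G k) _ _ (eqL2 i j) (MactA i (j - 1) a (alpha m)))).
Proof.
apply: Mt_ext => l g.
rewrite /alpha -Fact_inclM Fd_leibniz toN2D toN2Z /= scale1r addr0.
congr (_ + _ *: _); apply: (@existT_int_inj (fun k => Ac A k)).
  by rewrite existT_toN2 existT_mfun toN_act toN_inclM /dB /= scaler0 add0r.
by rewrite existT_toN2 existT_mfun toN_act.
Qed.

Lemma delta_act i j (a : Ac A i) (m : Mt G j) :
  delta (MactA i j a m) =
  @dcast (fun k => Mt G k) _ _ (eqS2 i j) (MactA i (j - 1 - 1) a (delta m)).
Proof.
apply: Mt_ext => l g.
rewrite /delta -Fact_inclM Fd_leibniz toN1D toN1Z.
rewrite toN1_dcast0 ?add0r; last first.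
  rewrite toN_act toN_inclM /= mfun_dcast0; last by rewrite /= Ad0 oppr0 Amul0l tcast0.
  by rewrite mfun_dcast0 ?scaler0 ?addr0 //; apply: MactA0r.
rewrite -[RHS](scale1r) -(sgn_sqr R i) -scalerA; congr (_ *: _).
apply: (@existT_int_inj (fun k => Ac A k)); rewrite existT_toN1 toN_act /=.
rewrite mfun_dcast0 ?scaler0 ?add0r ?addr0; last exact: MactA0l.
by apply: existT_scale; rewrite !existT_mfun.
Qed.

(** * Splitting off the Koszul generator *)

Definition deg_e : (0 : int) = 1 - 1 := esym (subrr 1).

Definition koszul_e : Bc A 1 := (@dcast (fun k => Ac A k) _ _ deg_e (Aone A), 0).

Lemma existT_Amul_e k (a : Ac A k) :
  existT (fun k => Ac A k) (1 - 1 + k) (Amul A (1 - 1) k koszul_e.1 a)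
  = existT (fun k => Ac A k) k a.
Proof.
rewrite (existT_congr2 (Amul A) (@existT_dcast _ _ _ _ _) (erefl (existT _ k a))).
by rewrite -[in RHS](Amul_1l a) existT_dcast.
Qed.

Lemma e_shift (i : int) : 1 + (i - 1) = i.
Proof. by rewrite addrC subrK. Qed.

Lemma koszul_decomp i (x : Fc F i) :
  x = @dcast (fun k => Fc F k) _ _ (e_shift i) (Fact F 1 (i - 1) koszul_e (inclM (toN x).1))
      + inclM (toN x).2.
Proof.
apply: toN_inj; congr pair; apply: Mt_ext => l g.
  rewrite toN1D toN_inclM /= addr0; symmetry.
  apply: (@existT_int_inj (fun k => Ac A k)); rewrite existT_toN1 toN_act toN_inclM /=.
  rewrite (@mfun_dcast0 _ _ _ (MactA 1 (i - 1 - 1) 0 _)); last exact: MactA0l.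
  by rewrite scaler0 !addr0 scale1r existT_mfun existT_MactA existT_Amul_e.
rewrite toN2D toN2_dcast0 ?add0r ?toN_inclM //.
by rewrite toN_act; apply: MactA0l.
Qed.

Lemma toN_d i (x : Fc F i) :
  toN (Fd F i x) =
  dN (fun i m => Mopp (@alpha i m)) (fun i m => Mscale t m) delta alpha (toN x).
Proof.
rewrite {1}(koszul_decomp x) FdD Fd_dcast.
congr pair; apply: Mt_ext => l g.
  rewrite toN1D /= scale1r addr0; congr (_ + _).
  apply: (@existT_int_inj (fun k => Ac A k)); rewrite existT_toN1 Fd_leibniz toN1D toN1Z.
  rewrite toN1_dcast0 ?add0r; last first.
    rewrite toN_act toN_inclM /= mfun_dcast0; last first.
      by rewrite (Apos (Ad A _ _)) // oppr0; apply: MactA0l.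
    by rewrite mfun_dcast0 ?scaler0 ?addr0 //; apply: MactA0r.
  rewrite sgn1; apply: existT_scale; rewrite existT_toN1 toN_act /=.
  rewrite (@mfun_dcast0 _ _ _ (MactA 1 (i - 1 - 1 - 1) 0 _)); last exact: MactA0l.
  by rewrite scaler0 !addr0 scale1r existT_mfun existT_MactA existT_Amul_e.
rewrite toN2D /= scale1r addr0; congr (_ + _).
apply: (@existT_int_inj (fun k => Ac A k)); rewrite existT_toN2 Fd_leibniz toN2D toN2Z.
rewrite (@toN2_dcast0 _ _ _ (Fact F 1 (i - 1 - 1) koszul_e _)); last first.
  by rewrite toN_act; apply: MactA0l.
rewrite scaler0 addr0 existT_toN2 toN_act toN_inclM /= Ad0 addr0 existT_dcast AmulZl.
by apply: existT_scale; apply: existT_Amul_e.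
Qed.

Lemma alpha_sq j (m : Mt G j) : alpha (alpha m) = Mopp (Mscale t (delta m)).
Proof.
apply: Mt_ext => l g.
have dd0 : t *: mfun (delta m) l g + mfun (alpha (alpha m)) l g = 0.
  have := congr1 (fun y => mfun y.2 l g) (toN_d (Fd F j (inclM m))).
  by rewrite Fd_sq toN20 /= scale1r addr0 => ->.
by move/eqP: dd0; rewrite (addrC (t *: _)) addr_eq0 => /eqP -> /=; rewrite !addr0 scaleN1r.
Qed.

Lemma delta_alpha j (m : Mt G j) : delta (alpha m) = alpha (delta m).
Proof.
apply: Mt_ext => l g.
have dd0 : - mfun (alpha (delta m)) l g + mfun (delta (alpha m)) l g = 0.
  have := congr1 (fun y => mfun y.1 l g) (toN_d (Fd F j (inclM m))).
  by rewrite Fd_sq toN10 /= scale1r !addr0 scaleN1r => ->.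
by apply/eqP; rewrite -subr_eq0 (addrC (mfun _ l g)) dd0.
Qed.

End SemiFreeModule.

Unset Implicit Arguments.

Theorem lemma2p8 (R : comPzRingType) (HR : noetherian R) (A : dga R) (t : R)
    (F : dgmodB A t) (G : forall l, Fc F l -> Prop) :
  bounded_below F -> semi_basis G ->
  exists (xi : forall i, Mt G i -> Mt G (i - 1))
         (tau : forall i, Mt G i -> Mt G i)
         (delta : forall i, Mt G i -> Mt G (i - 1 - 1))
         (alpha : forall i, Mt G i -> Mt G (i - 1)),
    (forall i, Mlinear (xi i)) /\ (forall i, Mlinear (tau i)) /\
    (forall i, Mlinear (delta i)) /\ (forall i, Mlinear (alpha i)) /\
    (forall i (m : Mt G i), xi i m = Mopp (alpha i m)) /\
    (forall i (m : Mt G i), tau i m = Mscale t m) /\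
    (forall i (m : Mt G i), alpha (i - 1) (alpha i m) = Mopp (Mscale t (delta i m))) /\
    (forall k (m : Mt G k), delta (k - 1) (alpha k m) = alpha (k - 1 - 1) (delta k m)) /\
    (forall i j (s : 'I_(Ar A i)) (m : Mt G j),
       delta (i + j) (MactA i j (Agam A i s) m) =
       @dcast (fun k => Mt G k) _ _ (eqS2 i j) (MactA i (j - 1 - 1) (Agam A i s) (delta j m))) /\
    (forall i j (s : 'I_(Ar A i)) (m : Mt G j),
       alpha (i + j) (MactA i j (Agam A i s) m) =
       Madd (@dcast (fun k => Mt G k) _ _ (eqL1 i j) (MactA (i - 1) j (Ad A i (Agam A i s)) m))
            (Mscale (sgn R i) (@dcast (fun k => Mt G k) _ _ (eqL2 i j)
                                 (MactA i (j - 1) (Agam A i s) (alpha j m))))) /\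
    (exists phi : forall i, Fc F i -> Nt G i, dg_iso xi tau delta alpha phi).
Proof.
move=> _ SB.
have scale_lin i (r : R) : Mlinear (fun m : Mt G i => Mscale r m).
  by move=> r' m1 m2; apply: Mt_ext => l g /=; rewrite !addr0 scalerDr !scalerA mulrC.
exists (fun i m => Mopp (alpha SB m)), (fun i m => Mscale t m), (delta SB), (alpha SB).
split; first by move=> i r m1 m2; rewrite alpha_lin; apply: scale_lin.
split; first by move=> i; apply: scale_lin.
split; first by move=> i; apply: delta_lin.
split; first by move=> i; apply: alpha_lin.
do 2 split=> //.
split; first by move=> i m; apply: alpha_sq.
split; first by move=> k m; apply: delta_alpha.
split; first by move=> i j s m; apply: delta_act.
split; first by move=> i j s m; apply: alpha_act.
exists (toN SB); split.
- by move=> i; exists (@ofN _ _ _ _ G i); [apply: toNK | apply: ofNK].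
- by move=> i r x y; apply: toN_lin.
- by move=> i x; apply: toN_d.
- by move=> i j b x; apply: toN_act.
Qed.
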